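(* There is no incompressible Følner sequence in the group $\mathbb Z^\infty=\bigoplus_{n=1}^\infty\mathbb Z$.
   Context: A sequence of translates $\{W_{n(i)}+f_i\}_{i=1}^I$ is incremental if $n(1)\ge\dots\ge n(I)$ and $f_i\notin\bigcup_{j<i}(W_{n(j)}+f_j)$. An increasing sequence $\{W_n\}$ of finite sets containing $0$ is incompressible if there is a constant $C$ such that for every incremental sequence at most $C$ of the sets $W_{n(i)}+f_i$ contain $0$. Følner: $|W_n\triangle(g+W_n)|/|W_n|\to0$ for every $g$. *)

From HB Require Import structures.
From mathcomp Require Import all_boot all_order all_algebra.
From mathcomp Require Import finmap.
Set Implicit Arguments. Unset Strict Implicit. Unset Printing Implicit Defensive.
Import Order.TTheory GRing.Theory Num.Theory.
Local Open Scope ring_scope.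
Local Open Scope fset_scope.

(* The group Z^infty = (+)_{n>=1} Z, as finitely supported functions
   nat -> int (coordinates indexed from 0 instead of 1). *)
Notation Zinf := {fsfun nat -> int with 0%R}.

Definition zinf0 : Zinf := [fsfun x in fset0 => (0 : int) | 0%R].

Definition zinf_add (f g : Zinf) : Zinf :=
  [fsfun k in finsupp f `|` finsupp g => (f k + g k)%R | 0%R].

Definition translate (W : {fset Zinf}) (f : Zinf) : {fset Zinf} :=
  [fset zinf_add w f | w in W].

Definition symdiff (A B : {fset Zinf}) : {fset Zinf} := (A `\` B) `|` (B `\` A).

Definition Folner (W : nat -> {fset Zinf}) : Prop :=
  forall g : Zinf, forall eps : rat, 0 < eps ->
    exists N : nat, forall n : nat, (N <= n)%N ->
      (#|` symdiff (W n) (translate (W n) g)|%:R / #|` W n|%:R : rat) < eps.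

Definition increasing_containing0 (W : nat -> {fset Zinf}) : Prop :=
  (forall n, W n `<=` W n.+1) /\ (forall n, zinf0 \in W n).

Definition incremental (W : nat -> {fset Zinf}) (s : seq (nat * Zinf)) : Prop :=
  forall i j : nat, (j < i)%N -> (i < size s)%N ->
    let pj := nth (0%N, zinf0) s j in
    let pi := nth (0%N, zinf0) s i in
    (pi.1 <= pj.1)%N /\ pi.2 \notin translate (W pj.1) pj.2.

Definition incompressible (W : nat -> {fset Zinf}) : Prop :=
  increasing_containing0 W /\
  exists C : nat, forall s : seq (nat * Zinf), incremental W s ->
    (count (fun p => zinf0 \in translate (W p.1) p.2) s <= C)%N.

From mathcomp Require Import all_boot all_order all_algebra.
From mathcomp Require Import finmap zify.
Set Implicit Arguments. Unset Strict Implicit. Unset Printing Implicit Defensive.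
Import Order.TTheory GRing.Theory Num.Theory.
Local Open Scope fset_scope.
Local Open Scope ring_scope.

(* For every C we build an incremental sequence of C + 1 translates
   W_{n_i} - a_i with a_i in W_{n_i}, so that all of them contain 0.  The
   sequence is built backwards, keeping a linear form phi (on finitely many
   coordinates) that is positive on all a_i chosen so far (the sequence stores
   the f_i = -a_i, with phi(f_i) < 0).  The next element a lives on a fresh
   coordinate k: by the Følner property some W_n, n large, contains w with
   w_k = c <> 0, and a is chosen in { w in W_n | w_k = c } minimising phi.
   Then a - a_i cannot lie in W_n, since it has k-th coordinate c and a
   smaller phi-value than a.  Finally phi is extended by a large multiple of c
   on the coordinate k to make it positive on a as well. *)

Lemma zinf_addE (f g : Zinf) k : zinf_add f g k = f k + g k.
Proof.
rewrite /zinf_add fsfun_fun in_fsetU.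
by case: finsuppP => [_|//]; case: finsuppP.
Qed.

Lemma zinf0E k : zinf0 k = 0.
Proof. by rewrite /zinf0 fsfun_fun in_fset0. Qed.

Definition zinf_opp (f : Zinf) : Zinf := [fsfun k in finsupp f => - f k | 0].

Lemma zinf_oppE f k : zinf_opp f k = - f k.
Proof. by rewrite /zinf_opp fsfun_fun; case: finsuppP => // _; rewrite oppr0. Qed.

Definition zinf_unit (k : nat) : Zinf := [fsfun x in [fset k] => 1 | 0].

Lemma zinf_unitE k x : zinf_unit k x = (x == k)%:R.
Proof. by rewrite /zinf_unit fsfun_fun inE; case: eqP. Qed.

Lemma mem_translate (W : {fset Zinf}) f x :
  x \in translate W f -> exists2 w, w \in W & forall k, w k = x k - f k.
Proof.
case/imfsetP => w wW -> /=; exists w => // k.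
by rewrite zinf_addE addrK.
Qed.

Lemma zinf0_translate_opp (W : {fset Zinf}) a :
  a \in W -> zinf0 \in translate W (zinf_opp a).
Proof.
move=> aW; apply/imfsetP; exists a => //=.
by apply/fsfunP => k; rewrite zinf_addE zinf_oppE zinf0E subrr.
Qed.

Lemma fresh_coord (s : seq Zinf) : exists k, forall f, f \in s -> f k = 0.
Proof.
exists (\max_(f <- s) \max_(x <- finsupp f) x)%N.+1 => f fs.
apply: fsfun_dflt; apply/negP => kf.
have := leq_trans (@leq_bigmax_seq _ _ xpredT id _ kf isT)
  (@leq_bigmax_seq _ _ xpredT (fun f : Zinf => \max_(x <- finsupp f) x)%N _ fs isT).
by rewrite ltnn.
Qed.

Lemma fset_argmin (T : choiceType) (d : Order.disp_t) (R : orderType d)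
    (S : {fset T}) (F : T -> R) (x0 : T) :
  x0 \in S -> exists2 x, x \in S & forall y, y \in S -> (F x <= F y)%O.
Proof.
move=> x0S.
case: (@arg_minP _ _ _ [` x0S] xpredT (F \o val) isT) => /= x _ xmin.
by exists (val x) => [|y yS]; [exact: fsvalP | exact: (xmin [` yS])].
Qed.

Lemma symdiff_translate_unit (W : {fset Zinf}) k :
  (forall w, w \in W -> w k = 0) -> W `<=` symdiff W (translate W (zinf_unit k)).
Proof.
move=> Wk; apply/fsubsetP => w wW.
rewrite in_fsetU in_fsetD wW andbT; apply/orP; left; apply/negP.
case/mem_translate => w' w'W /(_ k).
by rewrite zinf_unitE eqxx !Wk.
Qed.

Lemma Folner_coord_nonzero (W : nat -> {fset Zinf}) :
  Folner W -> (forall n, W n != fset0) ->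
  forall k N, exists2 n, (N <= n)%N & exists2 w, w \in W n & w k != 0.
Proof.
move=> FW W_neq0 k N.
have [N0 HN0] := FW (zinf_unit k) 1 ltr01.
exists (maxn N N0); first exact: leq_maxl.
set n := maxn N N0.
have [/hasP [w wW wk] | /hasPn Wk] := boolP (has (fun w : Zinf => w k != 0) (W n)).
  by exists w.
have := HN0 n (leq_maxr _ _).
have Wn_gt0 : (0 < #|` W n|)%N by rewrite cardfs_gt0.
rewrite ltr_pdivrMr ?ltr0n // mul1r ltr_nat ltnNge fsubset_leq_card //.
by apply: symdiff_translate_unit => w /Wk; rewrite negbK => /eqP.
Qed.

Definition lin_form (th : seq (nat * int)) (x : Zinf) : int :=
  \sum_(p <- th) p.2 * x p.1.

Lemma lin_form_cons k t th x : lin_form ((k, t) :: th) x = t * x k + lin_form th x.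
Proof. by rewrite /lin_form big_cons. Qed.

Lemma lin_formB th (w x y : Zinf) :
  (forall k, w k = x k - y k) -> lin_form th w = lin_form th x - lin_form th y.
Proof.
by move=> wE; rewrite /lin_form -sumrB; apply: eq_bigr => p _; rewrite wE mulrBr.
Qed.

Lemma lin_form_opp th x : lin_form th (zinf_opp x) = - lin_form th x.
Proof.
by rewrite /lin_form -sumrN; apply: eq_bigr => p _; rewrite zinf_oppE mulrN.
Qed.

Lemma notin_translate_argmin (V : {fset Zinf}) th k (a f : Zinf) :
  (forall w, w \in V -> w k = a k -> lin_form th a <= lin_form th w) ->
  f k = 0 -> lin_form th f < 0 -> f \notin translate V (zinf_opp a).
Proof.
move=> amin fk fneg; apply/negP => /mem_translate [w wV wE].
have := amin w wV; rewrite wE zinf_oppE fk sub0r opprK => /(_ erefl).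
by rewrite (lin_formB _ wE) lin_form_opp opprK lerDr leNgt fneg.
Qed.

Lemma incremental_cons (W : nat -> {fset Zinf}) p s :
  incremental W s ->
  (forall q, q \in s -> (q.1 <= p.1)%N /\ q.2 \notin translate (W p.1) p.2) ->
  incremental W (p :: s).
Proof.
move=> inc_s ps [//|i] [|j] /=; rewrite !ltnS => ji i_lt.
  exact: ps (mem_nth _ i_lt).
exact: inc_s.
Qed.

Section IncrementalFromFolner.

Variable W : nat -> {fset Zinf}.
Hypothesis FW : Folner W.
Hypothesis W_neq0 : forall n, W n != fset0.

Lemma incremental_extend s th nb :
  incremental W s -> (forall p, p \in s -> (p.1 <= nb)%N /\ lin_form th p.2 < 0) ->
  exists n a th', [/\ (nb <= n)%N, a \in W n, incremental W ((n, zinf_opp a) :: s)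
    & forall p, p \in (n, zinf_opp a) :: s -> lin_form th' p.2 < 0].
Proof.
move=> inc_s s_bnd.
have [k s_k] := fresh_coord [seq p.2 | p <- s].
have {}s_k p : p \in s -> p.2 k = 0 by move=> ps; apply: s_k; exact: map_f.
have [n nb_n [w0 w0W w0k]] := Folner_coord_nonzero FW W_neq0 k nb.
set c := w0 k in w0k.
have w0S : w0 \in [fset w in W n | w k == c] by rewrite !inE w0W eqxx.
have [a] := fset_argmin (lin_form th) w0S; rewrite !inE => /andP [aW /eqP ak] amin.
have {}amin w : w \in W n -> w k = a k -> lin_form th a <= lin_form th w.
  by move=> wW wk; apply: amin; rewrite !inE wW wk ak eqxx.
exists n, a, ((k, c * (`|lin_form th a| + 1)) :: th); split => //.
- apply: incremental_cons => // q qs; have [q_nb q_neg] := s_bnd q qs.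
  split; first exact: leq_trans q_nb nb_n.
  by apply: notin_translate_argmin amin (s_k q qs) q_neg.
- move=> p; rewrite inE lin_form_cons => /predU1P [-> /= | ps].
    rewrite lin_form_opp zinf_oppE ak.
    move: (lin_form th a) w0k => e /eqP c_neq0; nia.
  by rewrite s_k // mulr0 add0r; have [] := s_bnd p ps.
Qed.

Lemma long_incremental m : exists s, [/\ size s = m, incremental W s
  & all (fun p => zinf0 \in translate (W p.1) p.2) s].
Proof.
suff [s [th [nb [sz inc_s s_prop]]]] : exists s th nb, [/\ size s = m, incremental W s
  & forall p, p \in s -> [/\ zinf0 \in translate (W p.1) p.2, (p.1 <= nb)%N
                          & lin_form th p.2 < 0]].
  by exists s; split => //; apply/allP => p /s_prop [].
elim: m => [|m [s [th [nb [sz inc_s s_prop]]]]].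
  by exists [::], [::], 0%N; split => // i j _.
have s_bnd p : p \in s -> (p.1 <= nb)%N /\ lin_form th p.2 < 0 by case/s_prop.
have [n [a [th' [nb_n aW inc' neg']]]] := incremental_extend inc_s s_bnd.
exists ((n, zinf_opp a) :: s), th', n; split => //=; first by rewrite sz.
move=> p; rewrite inE => /predU1P [-> | ps].
  by split; [exact: zinf0_translate_opp | | apply: neg'; exact: mem_head].
have [p_zinf0 p_nb _] := s_prop p ps.
by split; [| exact: leq_trans p_nb nb_n | apply: neg'; rewrite inE ps orbT].
Qed.

End IncrementalFromFolner.

Theorem corollary2p8 :
  ~ exists W : nat -> {fset Zinf}, incompressible W /\ Folner W.
Proof.
move=> [W [[[_ W0] [C HC]] FW]].
have W_neq0 n : W n != fset0 by apply/eqP => Wn0; have := W0 n; rewrite Wn0 inE.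
have [s [sz inc_s all0]] := long_incremental FW W_neq0 C.+1.
have := HC s inc_s.
by move: all0; rewrite all_count => /eqP ->; rewrite sz ltnn.
Qed.
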